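(* Let $G\subseteq W(\mathsf D_n)$ be a finite group acting on $L=\bigoplus_{i=-1}^n\mathbb Z l_i$ via $\Phi$, and for $i\in\{-1,\dots,n\}$ let $f_i:G\to L$, $f_i(g)=\Phi(g)l_i-l_i$. Suppose $I\subseteq\{-1,1,\dots,n\}$ is such that $\xi=\frac12\sum_{i\in I}f_i$ is an $L$-valued $1$-cocycle with $0\neq[\xi]\in\mathrm H^1(G,L)$. Let $g\in G$ and let $\beta$ be a signed permutation cycle of $g$ whose underlying cycle is $(a_1\ a_2\ \dots\ a_w)$. If $a_1\in I$, then $\{a_1,\dots,a_w\}\subseteq I$.
   Context: $W(\mathsf B_n)$ is the group of signed permutations of the symbols $j^\pm$ ($j=1,\dots,n$), generated by $\mathfrak S_n$ and the involutions $c_j$ exchanging $j^+,j^-$; each element is $c_{j_1}\cdots c_{j_t}\tau$ with distinct $j_i$, $\tau\in\mathfrak S_n$; $\sigma(c_{j_1}\cdots c_{j_t}\tau)=(-1)^t$ and $W(\mathsf D_n)=\ker\sigma$. Writing $\tau$ as a product of disjoint cycles $\gamma$ (fixed points included as cycles of length one), the signed permutation cycle attached to $\gamma$ is $\beta_\gamma=(\prod_{j_i\in\mathrm{supp}\,\gamma}c_{j_i})\gamma$, and $g=\prod_\gamma\beta_\gamma$; the underlying cycle of $\beta_\gamma$ is $\gamma$. For $g=c_{j_1}\cdots c_{j_t}\tau\in W(\mathsf D_n)$ let $s(i)=-1$ if $i\in\{j_1,\dots,j_t\}$, else $s(i)=1$; $\Phi(g)$ is defined by $\Phi(g)l_0=l_0$,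 $\Phi(g)l_{-1}=l_{-1}+\frac t2l_0-\sum_{s(i)=-1}l_i$, and for $v\ge1$, $u=\tau^{-1}(v)$: $\Phi(g)l_v=l_u$ if $s(u)=1$, $\Phi(g)l_v=l_0-l_u$ if $s(u)=-1$. *)

From mathcomp Require Import all_boot all_order all_algebra all_fingroup.
Set Implicit Arguments. Unset Strict Implicit. Unset Printing Implicit Defensive.
Import GRing.Theory.
Local Open Scope ring_scope.

(* Symbols j^+ / j^- : the pair (j, true) is j^+, (j, false) is j^-.
   The ordinal j : 'I_n stands for the index j+1 in {1,...,n}. *)
Definition sym (n : nat) := ('I_n * bool)%type.

Definition signed_perm n (p : {perm sym n}) : bool :=
  [forall x : sym n, p (x.1, ~~ x.2) == ((p x).1, ~~ (p x).2)].

Definition WB n : {set {perm sym n}} := [set p | signed_perm p].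

(* MathComp composes permutations left to right ((p * q) x = q (p x)), so
   g = c_{j1} ... c_{jt} tau means: first the sign changes, then tau.
   Hence g(u^+) = tau(u)^{s(u)}. *)
Definition tau n (g : {perm sym n}) : 'I_n -> 'I_n := fun u => (g (u, true)).1.
(* the set {j_1,...,j_t}, i.e. the u with s(u) = -1 *)
Definition flips n (g : {perm sym n}) : {set 'I_n} := [set u | ~~ (g (u, true)).2].
Definition tinv n (g : {perm sym n}) (v : 'I_n) : 'I_n := ((g^-1)%g (v, true)).1.

Definition WD n : {set {perm sym n}} := [set p in WB n | ~~ odd #|flips p|].

(* Indices {-1, 0, 1, ..., n}: None = -1, Some None = 0, Some (Some j) = j+1 *)
Definition idx (n : nat) := option (option 'I_n).
Definition im1 {n} : idx n := None.
Definition i0 {n} : idx n := Some None.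
Definition ij {n} (j : 'I_n) : idx n := Some (Some j).

Definition L n := {ffun idx n -> int}.
Definition lb n (i : idx n) : L n := [ffun j => ((j == i) : nat)%:Z].

Definition Phi_basis n (g : {perm sym n}) (i : idx n) : L n :=
  match i with
  | None => lb im1 + lb i0 *~ ((#|flips g|)./2)%:Z
            - \sum_(u in flips g) lb (ij u)
  | Some None => lb i0
  | Some (Some v) =>
      let u := tinv g v in
      if u \in flips g then lb i0 - lb (ij u) else lb (ij u)
  end.

Definition Phi n (g : {perm sym n}) (x : L n) : L n :=
  \sum_(i : idx n) Phi_basis g i *~ x i.

Definition f n (i : idx n) (g : {perm sym n}) : L n := Phi g (lb i) - lb i.

From mathcomp Require Import all_boot all_order all_algebra all_fingroup zify ring.
Set Implicit Arguments. Unset Strict Implicit. Unset Printing Implicit Defensive.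
Import GRing.Theory Num.Theory.
Local Open Scope ring_scope.

(* The coefficient of l_w in 2 xi(h) = sum_(i in I) f_i(h) is even.  Computing
   it shows that tau_h(w) lies in I iff w does, except when -1 is in I and h
   changes the sign of w, in which case exactly one of w, tau_h(w) lies in I.
   So if -1 is not in I, every cycle of every h in G lies inside I or outside
   it.  If -1 is in I, the same rule gives sum_(i in I) f_i(h) = 2 f_(-1)(h)
   coordinatewise (at l_0 by counting the sign changes of h in two ways), so
   xi = f_(-1) is the coboundary of l_(-1), contradicting [xi] <> 0. *)

Lemma card_xor_preim (T : finType) (s : T -> T) (A : {set T}) : injective s ->
  #|[pred x | (x \in A) (+) (s x \in A)]| =
  (#|[pred x | (s x \in A) && (x \notin A)]|).*2.
Proof.
move=> s_inj; set both := #|[pred x | (x \in A) && (s x \in A)]|.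
have -> : #|[pred x | (x \in A) (+) (s x \in A)]| =
    #|[pred x | (x \in A) && (s x \notin A)]|
    + #|[pred x | (s x \in A) && (x \notin A)]|.
  rewrite -(cardID A); congr (_ + _); apply: eq_card => x;
    by rewrite !inE; case: (x \in A); case: (s x \in A).
have outA : #|[pred x | (x \in A) && (s x \notin A)]| + both = #|A|.
  rewrite -(cardID (s @^-1: A) A) addnC; congr (_ + _); apply: eq_card => x;
    by rewrite !inE; case: (x \in A); case: (s x \in A).
have intoA : #|[pred x | (s x \in A) && (x \notin A)]| + both = #|A|.
  rewrite -(card_preimset A s_inj) -(cardID A (s @^-1: A)) addnC.
  congr (_ + _); apply: eq_card => x;
    by rewrite !inE; case: (x \in A); case: (s x \in A).
lia.
Qed.

Lemma big_option_sum (T : finType) (V : nmodType) (F : option T -> V) :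
  \sum_x F x = F None + \sum_x F (Some x).
Proof.
rewrite (bigD1 None) //=; congr (_ + _).
rewrite (reindex_omap Some (fun o => o)) //=; last by case.
by apply: eq_bigl => x; rewrite eqxx.
Qed.

Lemma sum_natmul_eq (T : finType) (V : nmodType) (P : pred T) (F : T -> V) w :
  \sum_(u | P u) F u *+ (u == w) = F w *+ P w.
Proof.
rewrite big_mkcond (bigD1 w) //= big1 ?addr0 => [|u /negbTE->]; last first.
  by rewrite mulr0n if_same.
by rewrite eqxx mulr1n; case: (P w).
Qed.

Lemma L_double_inj n : injective (fun x : L n => x *+ 2).
Proof.
move=> x y /ffunP xy; apply/ffunP => j; apply/eqP.
by rewrite -(eqr_pMn2r (n := 2)) // -!ffunMnE xy.
Qed.

Lemma lbE n (i j : idx n) : lb i j = (j == i)%:Z.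
Proof. by rewrite ffunE. Qed.

Lemma ij_eq n (u w : 'I_n) : (ij u == ij w :> idx n) = (u == w).
Proof. by apply/eqP/eqP => [[]|->]. Qed.

Lemma lb_ij n (u w : 'I_n) : lb (ij u) (ij w) = (u == w)%:R.
Proof. by rewrite lbE ij_eq eq_sym; case: (u == w). Qed.

Lemma Phi_lb n (p : {perm sym n}) i : Phi p (lb i) = Phi_basis p i.
Proof.
rewrite /Phi (bigD1 i) //= big1 ?addr0 => [|j /negbTE ji]; last by rewrite lbE ji.
by rewrite lbE eqxx.
Qed.

Section SignedPerm.
Variables (n : nat) (p : {perm sym n}).
Hypothesis p_signed : signed_perm p.

Lemma signed_permE x : p (x.1, ~~ x.2) = ((p x).1, ~~ (p x).2).
Proof. by move/forallP/(_ x)/eqP: p_signed. Qed.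

Lemma perm_tau u : p (u, u \notin flips p) = (tau p u, true).
Proof.
rewrite /tau inE negbK; case: (boolP (p (u, true)).2) => [|flip].
  by case: (p _) => ? [].
change (u, false) with ((u, true).1, ~~ (u, true).2).
by rewrite signed_permE; move: flip; case: (p _) => ? [].
Qed.

Lemma tauK : cancel (tau p) (tinv p).
Proof. by move=> u; rewrite /tinv -perm_tau permK. Qed.

Lemma tau_inj : injective (tau p).
Proof. exact: can_inj tauK. Qed.

Lemma f_im1E :
  f im1 p = lb i0 *~ (#|flips p|./2)%:Z - \sum_(u in flips p) lb (ij u).
Proof. by rewrite /f Phi_lb /= addrAC [lb im1 + _]addrC addrK. Qed.

Lemma f_im1_ij w : f im1 p (ij w) = - (w \in flips p)%:Z.
Proof.
rewrite f_im1E !ffunE ffunMzE !ffunE mul0rz add0r sum_ffunE.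
by rewrite (eq_bigr _ (fun u _ => lb_ij u w)) sum_natmul_eq natz.
Qed.

Lemma f_im1_i0 : f im1 p i0 = (#|flips p|./2)%:Z.
Proof.
rewrite f_im1E !ffunE ffunMzE !ffunE sum_ffunE big1 ?eqxx ?intz ?subr0 //.
by move=> u _; rewrite lbE.
Qed.

Lemma f_im1_im1 : f im1 p im1 = 0.
Proof.
rewrite f_im1E !ffunE ffunMzE !ffunE sum_ffunE big1 ?mul0rz ?subr0 //.
by move=> u _; rewrite lbE.
Qed.

Variable I : {set idx n}.
Hypothesis i0_notin_I : i0 \notin I.

(* Reindexing by v = tau u turns Phi p (l_v) into l_u or l_0 - l_u. *)
Lemma sum_fE : \sum_(i in I) f i p = f im1 p *+ (im1 \in I)
  + \sum_(u | ij (tau p u) \in I)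
      (if u \in flips p then lb i0 - lb (ij u) else lb (ij u))
  - \sum_(v | ij v \in I) lb (ij v).
Proof.
have -> : \sum_(u | ij (tau p u) \in I)
    (if u \in flips p then lb i0 - lb (ij u) else lb (ij u)) =
    \sum_(v | ij v \in I) Phi_basis p (ij v).
  by rewrite [RHS](reindex_inj tau_inj); apply: eq_bigr => u _; rewrite /= tauK.
rewrite big_mkcond !big_option_sum (negbTE i0_notin_I) add0r -addrA; congr (_ + _).
  by case: (im1 \in I).
by rewrite -big_mkcond -sumrB; apply: eq_bigr => v _; rewrite /f Phi_lb.
Qed.

Lemma sum_f_ij w : (\sum_(i in I) f i p) (ij w) =
  (if w \in flips p then -1 else 1) *+ (ij (tau p w) \in I)
  - ((im1 \in I) && (w \in flips p))%:R - (ij w \in I)%:R.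
Proof.
rewrite sum_fE f_im1E !ffunE ffunMnE !ffunE ffunMzE !ffunE !sum_ffunE mul0rz add0r.
have -> : \sum_(u | ij (tau p u) \in I)
    (if u \in flips p then lb i0 - lb (ij u) else lb (ij u)) (ij w) =
    (if w \in flips p then -1 else 1) *+ (ij (tau p w) \in I).
  rewrite -[RHS](sum_natmul_eq (fun u => ij (tau p u) \in I)
    (fun u => if u \in flips p then -1 else 1)) /=.
  apply: eq_bigr => u _; case: ifP => _; rewrite !ffunE /= ij_eq eq_sym;
    by case: (u == w).
rewrite !(eq_bigr _ (fun u _ => lb_ij u w)) !sum_natmul_eq.
case: (im1 \in I); case: (w \in flips p) => /=; ring.
Qed.

Lemma sum_f_i0 : (\sum_(i in I) f i p) i0 =
  (#|flips p|./2)%:Z *+ (im1 \in I)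
  + #|[pred u | (ij (tau p u) \in I) && (u \in flips p)]|%:Z.
Proof.
have lb_ij_i0 (u : 'I_n) : lb (ij u) i0 = 0 by rewrite lbE.
rewrite sum_fE f_im1E !ffunE ffunMnE !ffunE ffunMzE !ffunE !sum_ffunE.
rewrite !(eq_bigr _ (fun u _ => lb_ij_i0 u)) !big1_eq eqxx intz !subr0.
congr (_ + _); rewrite -natz -sumr_const.
rewrite [RHS](eq_bigl (fun u => (ij (tau p u) \in I) && (u \in flips p))) //.
rewrite big_mkcondr.
by apply: eq_bigr => u _; case: ifP; rewrite !ffunE.
Qed.

Lemma sum_f_im1 : (\sum_(i in I) f i p) im1 = 0.
Proof.
rewrite sum_fE f_im1E !ffunE ffunMnE !ffunE ffunMzE !ffunE !sum_ffunE.
rewrite !big1 => [|u _|u _|u _]; rewrite ?ffunE //.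
  by rewrite mul0rz subr0 mul0rn !addr0.
by case: ifP; rewrite !ffunE.
Qed.

Lemma tau_memI_xor (x : L n) : x *+ 2 = \sum_(i in I) f i p -> forall w,
  (ij (tau p w) \in I) = (ij w \in I) (+) ((im1 \in I) && (w \in flips p)).
Proof.
move=> /ffunP x2 w; move: (x2 (ij w)); rewrite ffunMnE sum_f_ij mulr2n.
by case: (ij w \in I); case: (ij (tau p w) \in I); case: (im1 \in I);
  case: (w \in flips p) => /=; rewrite ?mulr0n ?mulr1n; lia.
Qed.

Lemma sum_f_double : im1 \in I ->
  (forall w, (ij (tau p w) \in I) = (ij w \in I) (+) (w \in flips p)) ->
  \sum_(i in I) f i p = f im1 p *+ 2.
Proof.
move=> Im1 xorI; apply/ffunP => -[[w|]|]; rewrite ffunMnE.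
- rewrite sum_f_ij f_im1_ij xorI Im1.
  by case: (ij w \in I); case: (w \in flips p) => /=; ring.
- rewrite sum_f_i0 f_im1_i0 Im1 mulr1n mulr2n; congr (_ + _).
  (* The sign changes of p are the u with exactly one of u, tau u in I. *)
  set A := [set u | ij u \in I].
  have flipsE u : (u \in flips p) = (u \in A) (+) (tau p u \in A).
    by rewrite [_ \in A]inE [_ \in A]inE xorI addKb.
  have -> : #|flips p| = #|[pred u | (u \in A) (+) (tau p u \in A)]|.
    by apply: eq_card => u; rewrite flipsE.
  rewrite card_xor_preim ?doubleK; last exact: tau_inj.
  congr (Posz _); apply: eq_card => u; rewrite [in LHS]inE /= flipsE !inE.
  by case: (ij u \in I); case: (ij (tau p u) \in I).
- by rewrite sum_f_im1 f_im1_im1.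
Qed.

End SignedPerm.

Theorem lemma3p3 (n : nat) (G : {group {perm sym n}}) (HG : G \subset WD n)
  (I : {set idx n}) (HI : i0 \notin I)
  (xi : {perm sym n} -> L n)
  (Hxi : forall g, g \in G -> xi g *+ 2 = \sum_(i in I) f i g)
  (Hcoc : forall g h, g \in G -> h \in G -> xi (g * h)%g = xi g + Phi g (xi h))
  (Hnz : ~ (exists x : L n, forall g, g \in G -> xi g = Phi g x - x))
  (g : {perm sym n}) (Hg : g \in G) (a : 'I_n) (Ha : ij a \in I) :
  forall k : nat, ij (iter k (tau g) a) \in I.
Proof.
have signedG h : h \in G -> signed_perm h.
  by move=> /(subsetP HG); rewrite !inE => /andP[].
have xorG h : h \in G -> forall w,
    (ij (tau h w) \in I) = (ij w \in I) (+) ((im1 \in I) && (w \in flips h)).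
  by move=> hG; exact (tau_memI_xor (signedG h hG) HI (Hxi h hG)).
case: (boolP (im1 \in I)) => [Im1 | NIm1].
  case: Hnz; exists (lb im1) => h hG; apply: L_double_inj.
  rewrite /= Hxi // sum_f_double //; first exact: signedG.
  by move=> w; rewrite xorG // Im1.
by elim=> [|k IHk] //=; rewrite xorG // (negbTE NIm1) addbF.
Qed.
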